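(* Let $\alpha\in\mathbb{R}\setminus\{0\}$, let $\delta^{\star}(\alpha)=1/\alpha^2$ if $\alpha\le 2$ and $\delta^{\star}(\alpha)=\frac{1}{2\alpha}\exp\{1-\frac{\alpha}{2}\}$ if $\alpha>2$, let $|\delta|\le\delta^{\star}(\alpha)$, and let $$C(u,v)=uv+\delta\left(1-e^{\alpha(u-u^2)}\right)\left(1-e^{\alpha(v-v^2)}\right),\quad (u,v)\in[0,1]^2.$$ Then Spearman's rho $\rho_C=12\int_0^1\int_0^1 C(u,v)\,du\,dv-3$ and Gini's gamma coefficient $\gamma_C=4\left\{\int_0^1 C(u,1-u)\,du-\int_0^1(u-C(u,u))\,du\right\}$ are given by $$\rho_C=\begin{cases}12\delta\left[1-\sqrt{\frac{\pi}{|\alpha|}}\,e^{\alpha/4}\,\mathrm{erfi}\left(\frac{\sqrt{|\alpha|}}{2}\right)\right]^2,&\alpha<0,\\[2mm] 12\delta\left[1-\sqrt{\frac{\pi}{\alpha}}\,e^{\alpha/4}\,\mathrm{erf}\left(\frac{\sqrt{\alpha}}{2}\right)\right]^2,&\alpha>0,\end{cases}$$ $$\gamma_C=\begin{cases}8\delta\left[1-2\sqrt{\frac{\pi}{|\alpha|}}\,e^{\alpha/4}\,\mathrm{erfi}\left(\frac{\sqrt{|\alpha|}}{2}\right)+\sqrt{\frac{\pi}{2|\alpha|}}\,e^{\alpha/2}\,\mathrm{erfi}\left(\sqrt{\frac{|\alpha|}{2}}\right)\right],&\alpha<0,\\[2mm] 8\delta\left[1-2\sqrt{\frac{\pi}{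\alpha}}\,e^{\alpha/4}\,\mathrm{erf}\left(\frac{\sqrt{\alpha}}{2}\right)+\sqrt{\frac{\pi}{2\alpha}}\,e^{\alpha/2}\,\mathrm{erf}\left(\sqrt{\frac{\alpha}{2}}\right)\right],&\alpha>0.\end{cases}$$
   Context: $\mathrm{erf}(t)=\frac{2}{\sqrt{\pi}}\int_0^t e^{-z^2}\,dz$ is the error function and $\mathrm{erfi}(t)=\frac{2}{\sqrt{\pi}}\int_0^t e^{z^2}\,dz$ is the imaginary error function. *)

From Stdlib Require Import Reals.
From Coquelicot Require Import Coquelicot.
Open Scope R_scope.

Definition erf (t : R) : R :=
  2 / sqrt PI * RInt (fun z => exp (- (z ^ 2))) 0 t.

Definition erfi (t : R) : R :=
  2 / sqrt PI * RInt (fun z => exp (z ^ 2)) 0 t.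

Definition delta_star (alpha : R) : R :=
  if Rle_dec alpha 2 then 1 / alpha ^ 2
  else 1 / (2 * alpha) * exp (1 - alpha / 2).

Definition Cfam (alpha delta : R) (u v : R) : R :=
  u * v + delta * (1 - exp (alpha * (u - u ^ 2))) * (1 - exp (alpha * (v - v ^ 2))).

Definition spearman_rho (C : R -> R -> R) : R :=
  12 * RInt (fun v => RInt (fun u => C u v) 0 1) 0 1 - 3.

Definition gini_gamma (C : R -> R -> R) : R :=
  4 * (RInt (fun u => C u (1 - u)) 0 1 - RInt (fun u => u - C u u) 0 1).

(** Write [phi u = 1 - exp (alpha (u - u^2))], so that
    [C(u,v) = u v + delta phi(u) phi(v)] and [phi(1 - u) = phi(u)].  The
    perturbation separates, hence [rho_C = 12 delta (int phi)^2]; the two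
    integrands of [gamma_C] differ by [2 delta phi(u)^2], since
    [C(u,1-u) = u - u^2 + delta phi(u)^2] and [C(u,u) = u^2 + delta phi(u)^2],
    hence [gamma_C = 8 delta int phi^2].
    Both are thus expressed through [E(a) = int_0^1 exp (a (u - u^2)) du] at
    [a = alpha] and [a = 2 alpha].  Completing the square,
    [a (u - u^2) = a/4 - a (u - 1/2)^2], and the substitution
    [z = sqrt|a| (u - 1/2)] turns [E(a)] into a Gaussian integral over a
    symmetric interval, i.e. into [erf] for [a > 0] and [erfi] for [a < 0]. *)

From Stdlib Require Import Reals Lra.
From Coquelicot Require Import Coquelicot.
Open Scope R_scope.

Definition Cfam_phi (alpha u : R) : R := 1 - exp (alpha * (u - u ^ 2)).

Definition parabola_exp_integral (a : R) : R :=
  RInt (fun u => exp (a * (u - u ^ 2))) 0 1.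

(** [RInt] is valued in the carrier of a [CompleteNormedModule]; [ring] and
    [field] only recognise the equation once its type is stated to be [R]. *)
Ltac eq_in_R := match goal with |- ?x = ?y => change (x = y :> R) end.

Ltac solve_continuous :=
  apply (@ex_derive_continuous R_AbsRing R_NormedModule);
  unfold Cfam_phi; auto_derive; auto.

Ltac solve_ex_RInt :=
  apply (@ex_RInt_continuous R_CompleteNormedModule); intros; solve_continuous.

Lemma RInt_ext_R (f g : R -> R) (a b : R) :
  (forall x, f x = g x) -> RInt f a b = RInt g a b.
Proof. intros Hfg. apply RInt_ext; intros x _. apply Hfg. Qed.

Lemma RInt_mult_l (f : R -> R) (l a b : R) :
  ex_RInt f a b -> RInt (fun x => l * f x) a b = l * RInt f a b.
Proof. intros Hf. exact (RInt_scal f a b l Hf). Qed.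

Lemma RInt_lin (f g : R -> R) (p q a b : R) :
  ex_RInt f a b -> ex_RInt g a b ->
  RInt (fun x => p * f x + q * g x) a b = p * RInt f a b + q * RInt g a b.
Proof.
  intros Hf Hg.
  rewrite <- (RInt_mult_l f p a b Hf), <- (RInt_mult_l g q a b Hg).
  exact (RInt_plus _ _ a b (ex_RInt_scal f a b p Hf) (ex_RInt_scal g a b q Hg)).
Qed.

Lemma RInt_const_01 (c : R) : RInt (fun _ => c) 0 1 = c.
Proof. rewrite RInt_const. unfold scal; simpl; unfold mult; simpl. ring. Qed.

Lemma RInt_id_01 : RInt (fun u => u) 0 1 = 1 / 2.
Proof.
  assert (Hder : forall x, Rmin 0 1 <= x <= Rmax 0 1 ->
            is_derive (fun x => x ^ 2 / 2) x x)
    by (intros; auto_derive; auto; field).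
  assert (Hcont : forall x, Rmin 0 1 <= x <= Rmax 0 1 -> continuous (fun x => x) x)
    by (intros; solve_continuous).
  rewrite (is_RInt_unique _ _ _ _ (@is_RInt_derive R_CompleteNormedModule _ _ 0 1 Hder Hcont)).
  unfold minus, plus, opp; simpl. field.
Qed.

Lemma RInt_even (k : R -> R) (c : R) :
  (forall z, continuous k z) -> (forall z, k (- z) = k z) ->
  RInt k (- c) c = 2 * RInt k 0 c.
Proof.
  intros Hk Heven.
  assert (Hex : forall a b, ex_RInt k a b)
    by (intros; apply (@ex_RInt_continuous R_CompleteNormedModule); auto).
  assert (Hleft : RInt k (- c) 0 = RInt k 0 c).
  { pose proof (RInt_comp_lin k (-1) 0 c 0) as Hrefl.
    replace (-1 * c + 0) with (- c) in Hrefl by ring.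
    replace (-1 * 0 + 0) with 0 in Hrefl by ring.
    rewrite <- (Hrefl (Hex _ _)), (RInt_ext _ (fun x => opp (k x))).
    - rewrite (@RInt_opp R_CompleteNormedModule) by apply Hex.
      apply (@opp_RInt_swap R_CompleteNormedModule), Hex.
    - intros x _. unfold scal, opp; simpl; unfold mult; simpl.
      replace (-1 * x + 0) with (- x) by ring. rewrite Heven. ring. }
  rewrite <- (RInt_Chasles k (- c) 0 c (Hex _ _) (Hex _ _)), Hleft.
  unfold plus; simpl. ring.
Qed.

Lemma RInt_even_comp_centered (k : R -> R) (c : R) :
  (forall z, continuous k z) -> (forall z, k (- z) = k z) -> 0 < c ->
  RInt (fun u => k (c * u - c / 2)) 0 1 = 2 / c * RInt k 0 (c / 2).
Proof.
  intros Hk Heven Hc.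
  assert (Hsubst : RInt (fun u => c * k (c * u - c / 2)) 0 1 = RInt k (- (c / 2)) (c / 2)).
  { pose proof (RInt_comp_lin k c (- (c / 2)) 0 1) as Hlin.
    replace (c * 0 + - (c / 2)) with (- (c / 2)) in Hlin by ring.
    replace (c * 1 + - (c / 2)) with (c / 2) in Hlin by field.
    rewrite <- Hlin by (apply (@ex_RInt_continuous R_CompleteNormedModule); auto).
    apply RInt_ext; intros x _.
    unfold scal; simpl; unfold mult; simpl.
    replace (c * x + - (c / 2)) with (c * x - c / 2) by ring. reflexivity. }
  assert (Hex : ex_RInt (fun u => k (c * u - c / 2)) 0 1).
  { apply (@ex_RInt_continuous R_CompleteNormedModule); intros z _.
    apply (continuous_comp (fun u => c * u - c / 2) k); [solve_continuous | apply Hk]. }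
  rewrite RInt_even in Hsubst by assumption.
  rewrite RInt_mult_l in Hsubst by exact Hex.
  apply (Rmult_eq_reg_l c); [| lra].
  rewrite Hsubst. field. lra.
Qed.

(** Completing the square: [a (u - u^2) = a/4 + s (c u - c/2)^2]. *)
Lemma parabola_exp_integral_gauss (s c a : R) :
  0 < c -> a = - s * (c * c) ->
  parabola_exp_integral a = exp (a / 4) * (2 / c) * RInt (fun z => exp (s * z ^ 2)) 0 (c / 2).
Proof.
  intros Hc Ha. unfold parabola_exp_integral.
  rewrite (RInt_ext_R _ (fun u => exp (a / 4) * exp (s * (c * u - c / 2) ^ 2))).
  2:{ intros x. rewrite <- exp_plus. f_equal. subst a. field. }
  rewrite RInt_mult_l by solve_ex_RInt.
  rewrite (RInt_even_comp_centered (fun z => exp (s * z ^ 2))); auto.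
  - ring.
  - intros; solve_continuous.
  - intros; f_equal; ring.
Qed.

Lemma parabola_exp_integral_pos (a : R) : 0 < a ->
  parabola_exp_integral a = sqrt (PI / a) * exp (a / 4) * erf (sqrt a / 2).
Proof.
  intros Ha.
  assert (Hc : 0 < sqrt a) by (apply sqrt_lt_R0; auto).
  assert (Hpi : 0 < sqrt PI) by (apply sqrt_lt_R0, PI_RGT_0).
  rewrite (parabola_exp_integral_gauss (-1) (sqrt a) a Hc)
    by (rewrite sqrt_sqrt; lra).
  unfold erf. rewrite sqrt_div_alt by auto.
  rewrite (RInt_ext_R (fun z => exp (-1 * z ^ 2)) (fun z => exp (- (z ^ 2))))
    by (intros; f_equal; ring).
  field. lra.
Qed.

Lemma parabola_exp_integral_neg (a : R) : a < 0 ->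
  parabola_exp_integral a = sqrt (PI / Rabs a) * exp (a / 4) * erfi (sqrt (Rabs a) / 2).
Proof.
  intros Ha.
  assert (Habs : Rabs a = - a) by (apply Rabs_left; auto).
  assert (Hc : 0 < sqrt (Rabs a)) by (apply sqrt_lt_R0; lra).
  assert (Hpi : 0 < sqrt PI) by (apply sqrt_lt_R0, PI_RGT_0).
  rewrite (parabola_exp_integral_gauss 1 (sqrt (Rabs a)) a Hc)
    by (rewrite sqrt_sqrt; lra).
  unfold erfi. rewrite sqrt_div_alt by lra.
  rewrite (RInt_ext_R (fun z => exp (1 * z ^ 2)) (fun z => exp (z ^ 2)))
    by (intros; f_equal; ring).
  field. lra.
Qed.

Lemma Cfam_phi_sym (alpha u : R) : Cfam_phi alpha (1 - u) = Cfam_phi alpha u.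
Proof. unfold Cfam_phi. do 3 f_equal. ring. Qed.

Lemma RInt_Cfam_phi (alpha : R) :
  RInt (Cfam_phi alpha) 0 1 = 1 - parabola_exp_integral alpha.
Proof.
  rewrite (RInt_ext_R _ (fun u => 1 * 1 + (-1) * exp (alpha * (u - u ^ 2))))
    by (intros; unfold Cfam_phi; ring).
  rewrite RInt_lin, RInt_const_01 by solve_ex_RInt.
  unfold parabola_exp_integral. eq_in_R. ring.
Qed.

Lemma RInt_Cfam_phi_sq (alpha : R) :
  RInt (fun u => Cfam_phi alpha u ^ 2) 0 1 =
  1 - 2 * parabola_exp_integral alpha + parabola_exp_integral (2 * alpha).
Proof.
  rewrite (RInt_ext_R _ (fun u => 1 * (2 * Cfam_phi alpha u - 1)
                                + 1 * exp (2 * alpha * (u - u ^ 2)))).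
  2:{ intros u. unfold Cfam_phi.
      replace (2 * alpha * (u - u ^ 2)) with (alpha * (u - u ^ 2) + alpha * (u - u ^ 2))
        by ring.
      rewrite exp_plus. ring. }
  rewrite RInt_lin by solve_ex_RInt.
  rewrite (RInt_ext_R _ (fun u => 2 * Cfam_phi alpha u + (-1) * 1)) by (intros; ring).
  rewrite RInt_lin, RInt_Cfam_phi, RInt_const_01 by solve_ex_RInt.
  unfold parabola_exp_integral. eq_in_R. ring.
Qed.

Lemma spearman_rho_Cfam (alpha delta : R) :
  spearman_rho (Cfam alpha delta) = 12 * delta * (1 - parabola_exp_integral alpha) ^ 2.
Proof.
  set (K := RInt (Cfam_phi alpha) 0 1).
  assert (Hinner : forall v, RInt (fun u => Cfam alpha delta u v) 0 1
                             = 1 / 2 * v + delta * K * Cfam_phi alpha v).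
  { intros v.
    rewrite (RInt_ext_R _ (fun u => v * u + delta * Cfam_phi alpha v * Cfam_phi alpha u))
      by (intros; unfold Cfam, Cfam_phi; ring).
    rewrite RInt_lin, RInt_id_01 by solve_ex_RInt.
    fold K. eq_in_R. field. }
  unfold spearman_rho.
  rewrite (RInt_ext_R _ _ 0 1 Hinner).
  rewrite RInt_lin, RInt_id_01 by solve_ex_RInt.
  unfold K. rewrite RInt_Cfam_phi. field.
Qed.

Lemma gini_gamma_Cfam (alpha delta : R) :
  gini_gamma (Cfam alpha delta) =
  8 * delta * (1 - 2 * parabola_exp_integral alpha + parabola_exp_integral (2 * alpha)).
Proof.
  unfold gini_gamma.
  replace (RInt (fun u => Cfam alpha delta u (1 - u)) 0 1
           - RInt (fun u => u - Cfam alpha delta u u) 0 1)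
    with (1 * RInt (fun u => Cfam alpha delta u (1 - u)) 0 1
          + (-1) * RInt (fun u => u - Cfam alpha delta u u) 0 1) by ring.
  rewrite <- RInt_lin by (unfold Cfam; solve_ex_RInt).
  rewrite (RInt_ext_R _ (fun u => 2 * delta * Cfam_phi alpha u ^ 2)).
  2:{ intros u. unfold Cfam. fold (Cfam_phi alpha u) (Cfam_phi alpha (1 - u)).
      rewrite Cfam_phi_sym. ring. }
  rewrite RInt_mult_l, RInt_Cfam_phi_sq by solve_ex_RInt.
  ring.
Qed.

Lemma sqrt_double_div2 (x : R) : 0 <= x -> sqrt (2 * x) / 2 = sqrt (x / 2).
Proof.
  intros Hx. replace (x / 2) with ((2 * x) / (2 * 2)) by field.
  rewrite sqrt_div_alt, sqrt_square by lra. reflexivity.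
Qed.

Theorem proposition1 (alpha delta : R)
  (Halpha : alpha <> 0)
  (Hdelta : Rabs delta <= delta_star alpha) :
  (alpha < 0 ->
     spearman_rho (Cfam alpha delta) =
       12 * delta * (1 - sqrt (PI / Rabs alpha) * exp (alpha / 4)
                          * erfi (sqrt (Rabs alpha) / 2)) ^ 2 /\
     gini_gamma (Cfam alpha delta) =
       8 * delta * (1 - 2 * sqrt (PI / Rabs alpha) * exp (alpha / 4)
                          * erfi (sqrt (Rabs alpha) / 2)
                      + sqrt (PI / (2 * Rabs alpha)) * exp (alpha / 2)
                          * erfi (sqrt (Rabs alpha / 2)))) /\
  (0 < alpha ->
     spearman_rho (Cfam alpha delta) =
       12 * delta * (1 - sqrt (PI / alpha) * exp (alpha / 4)
                          * erf (sqrt alpha / 2)) ^ 2 /\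
     gini_gamma (Cfam alpha delta) =
       8 * delta * (1 - 2 * sqrt (PI / alpha) * exp (alpha / 4)
                          * erf (sqrt alpha / 2)
                      + sqrt (PI / (2 * alpha)) * exp (alpha / 2)
                          * erf (sqrt (alpha / 2)))).
Proof.
  split; intros Ha; rewrite spearman_rho_Cfam, gini_gamma_Cfam.
  - rewrite !parabola_exp_integral_neg by lra.
    rewrite Rabs_mult, (Rabs_right 2), sqrt_double_div2 by (lra || apply Rabs_pos).
    replace (2 * alpha / 4) with (alpha / 2) by field.
    split; ring.
  - rewrite !parabola_exp_integral_pos, sqrt_double_div2 by lra.
    replace (2 * alpha / 4) with (alpha / 2) by field.
    split; ring.
Qed.
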